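(* Valuated flag gammoids are closed under translation: if $\boldsymbol\mu=(\mu_1,\dots,\mu_s)$ is a valuated flag gammoid on $[n]$ and $x\in\mathbb{R}^n$, then $\boldsymbol\mu+x=(\mu_1+x,\dots,\mu_s+x)$, where $(\mu_j+x)(B)=\mu_j(B)+\sum_{i\in B}x_i$, is a valuated flag gammoid.
   Context: A valuated flag gammoid is a tuple $(\mu_1,\dots,\mu_s)$ arising as follows: $\Gamma=(V,E)$ is a finite directed graph with $[n]\subseteq V$, $w:E\to\mathbb{R}$ edge weights with no negative-weight directed cycle, $S_1\subset\dots\subset S_s\subseteq V$ with $|S_j|=d_j$ such that some subset of $[n]$ has a linking onto each $S_j$, and $\mu_j(I)$, for $I\in\binom{[n]}{d_j}$, is the minimum total weight of a linking from $I$ onto $S_j$ ($\infty$ if none). A linking from $I$ onto $J$ is a family of $|I|=|J|$ pairwise vertex-disjoint directed paths (length 0 allowed) from the vertices of $I$ to the vertices of $J$. *)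

From HB Require Import structures.
From mathcomp Require Import all_boot all_order all_algebra.
From mathcomp Require Import reals constructive_ereal.
Set Implicit Arguments. Unset Strict Implicit. Unset Printing Implicit Defensive.
Import Order.TTheory GRing.Theory Num.Theory.
Local Open Scope ring_scope.

Section Gammoid.
Variables (R : realType) (V : finType) (n : nat).
Variables (E : rel V) (w : V -> V -> R) (emb : 'I_n -> V).

Definition is_dpath (p : seq V) : bool :=
  if p is x :: s then path E x s && uniq p else false.

Definition pweight (p : seq V) : R :=
  \sum_(e <- zip p (behead p)) w e.1 e.2.

Definition dstarts (L : seq (seq V)) : {set V} :=
  [set v | has (fun p => ohead p == Some v) L].
Definition dends (L : seq (seq V)) : {set V} :=
  [set v | has (fun p => ohead (rev p) == Some v) L].

Definition is_linking (I : {set 'I_n}) (J : {set V}) (L : seq (seq V)) : Prop :=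
  [/\ all is_dpath L, uniq (flatten L),
      dstarts L = emb @: I & dends L = J].

Definition lweight (L : seq (seq V)) : R := \sum_(p <- L) pweight p.

Definition min_linking_weight (I : {set 'I_n}) (J : {set V}) (m : \bar R) : Prop :=
  ((forall L, ~ is_linking I J L) /\ m = +oo%E) \/
  (exists L, [/\ is_linking I J L, m = (lweight L)%:E &
     forall L', is_linking I J L' -> (m <= (lweight L')%:E)%E]).

Definition no_neg_cycle : Prop :=
  forall (x : V) (s : seq V), uniq (x :: s) -> cycle E (x :: s) ->
    0 <= pweight (x :: rcons s x).

End Gammoid.

(* (mu_1, ..., mu_s) with mu_j defined on the d_j-subsets of [n]
   (values of mu j on sets of other sizes are irrelevant). *)
Definition valuated_flag_gammoid (R : realType) (n s : nat) (d : 'I_s -> nat)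
    (mu : 'I_s -> {set 'I_n} -> \bar R) : Prop :=
  exists (V : finType) (E : rel V) (w : V -> V -> R) (emb : 'I_n -> V)
         (S : 'I_s -> {set V}),
    [/\ injective emb /\ no_neg_cycle E w,
        (forall j k : 'I_s, (j < k)%N -> S j \proper S k),
        (forall j, #|S j| = d j),
        (forall j, exists I L, is_linking E emb I (S j) L) &
        (forall j (I : {set 'I_n}), #|I| = d j ->
          min_linking_weight E w emb I (S j) (mu j I))].

Definition translate_flag (R : realType) (n s : nat)
    (mu : 'I_s -> {set 'I_n} -> \bar R) (x : 'I_n -> R) :
    'I_s -> {set 'I_n} -> \bar R :=
  fun j B => (mu j B + (\sum_(i in B) x i)%:E)%E.

From HB Require Import structures.
From mathcomp Require Import all_boot all_order all_algebra.
From mathcomp Require Import reals constructive_ereal.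
Set Implicit Arguments. Unset Strict Implicit. Unset Printing Implicit Defensive.
Import Order.TTheory GRing.Theory Num.Theory.
Local Open Scope ring_scope.

(* Give every vertex a of the network a pendant in-neighbour a' with the
   single edge a' -> a, of weight x_i when a is the image of i, and move the
   sources to the pendant vertices.  Prepending a' to each path is a bijection
   between the linkings from I onto S_j before and after the change, and it
   adds exactly sum_(i in I) x_i to the weight of every linking, so it
   translates each minimum by that amount.  The new edges lie on no cycle, so
   no negative cycle is created. *)

Section LinkingHeads.
Variables (R : nmodType) (V : finType) (n : nat).
Variables (E : rel V) (emb : 'I_n -> V).
Implicit Type L : seq (seq V).

Lemma heads_subseq L : subseq (pmap ohead L) (flatten L).
Proof.
elim: L => [|[|a p] L IH] //=.
by rewrite eqxx; apply: subseq_trans IH (suffix_subseq _ _).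
Qed.

Lemma mem_heads L a : (a \in pmap ohead L) = (a \in dstarts L).
Proof.
rewrite inE; elim: L => [|[|b p] L IH] //=.
by rewrite in_cons IH eq_sym.
Qed.

Lemma sum_heads_linking (f : V -> R) I S L :
  injective emb -> is_linking E emb I S L ->
  \sum_(a <- pmap ohead L) f a = \sum_(i in I) f (emb i).
Proof.
move=> emb_inj [_ uniqL startsL _].
rewrite big_uniq; last exact: subseq_uniq (heads_subseq L) uniqL.
rewrite (eq_bigl (mem (emb @: I))); last first.
  by move=> a; rewrite /= mem_heads startsL.
by rewrite big_imset //= => i j _ _; apply: emb_inj.
Qed.

End LinkingHeads.

Section PendantNetwork.
Variable V : finType.
Implicit Types (a b : V) (p : seq V) (r : seq (V + V)) (L : seq (seq V)).

(* [inl a] is the vertex a of the original network, [inr a] its pendant copy. *)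
Definition pendant_rel (E : rel V) : rel (V + V) := fun u v =>
  match u, v with
  | inl a, inl b => E a b
  | inr a, inl b => b == a
  | _, _ => false
  end.

Definition pendant_path p : seq (V + V) :=
  if p is a :: _ then inr a :: map inl p else [::].

Definition unpendant_path r : seq V :=
  pmap (fun v => if v is inl a then Some a else None) r.

Variable E : rel V.

Lemma path_pendant_map_inl a p :
  path (pendant_rel E) (inl a) (map inl p) = path E a p.
Proof. by elim: p a => //= b p IH a; rewrite IH. Qed.

Lemma path_pendant_inl a r :
  path (pendant_rel E) (inl a) r -> r = map inl (unpendant_path r).
Proof.
by elim: r a => //= -[b|b] r IH a //= /andP[_ /IH {1}->].
Qed.

Lemma path_pendant_inr a r :
  path (pendant_rel E) (inr a) r -> r != [::] ->
  inr a :: r = pendant_path (unpendant_path r).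
Proof.
case: r => [|[b|b] r] //= /andP[/eqP -> pathr] _.
by rewrite {1}(path_pendant_inl pathr).
Qed.

Lemma dpath_pendant p :
  is_dpath (pendant_rel E) (pendant_path p) = is_dpath E p.
Proof.
case: p => [|a p] //; rewrite /is_dpath /pendant_path -/(map inl (a :: p)).
rewrite [path _ _ _]/= eqxx path_pendant_map_inl cons_uniq.
have -> : inr a \notin map inl (a :: p) by apply/mapP => -[].
by rewrite (map_inj_uniq (@inl_inj V V)).
Qed.

Lemma dstarts_pendant L : dstarts (map pendant_path L) = inr @: dstarts L.
Proof.
apply/setP => -[b|b]; rewrite /dstarts !inE.
- transitivity false; first by apply/negbTE/hasPn => _ /mapP[[|a p] _ ->].
  by apply/esym/negbTE/imsetP => -[].
- rewrite (mem_imset _ _ (@inr_inj V V)) inE has_map.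
  by apply: eq_has => -[|a p].
Qed.

Lemma ohead_rev_cons (T : Type) (a : T) s :
  ohead (rev (a :: s)) = Some (last a s).
Proof. by rewrite lastI rev_rcons. Qed.

Lemma dends_pendant L : dends (map pendant_path L) = inl @: dends L.
Proof.
have ends_pendant a p :
    ohead (rev (pendant_path (a :: p))) = Some (inl (last a p)).
  by rewrite ohead_rev_cons /= last_map.
apply/setP => -[b|b]; rewrite /dends !inE.
- rewrite (mem_imset _ _ (@inl_inj V V)) inE has_map.
  by apply: eq_has => -[|a p] //=; rewrite ends_pendant ohead_rev_cons.
- transitivity false.
    by apply/negbTE/hasPn => _ /mapP[[|a p] _ ->] //; rewrite ends_pendant.
  by apply/esym/negbTE/imsetP => -[].
Qed.

Lemma perm_flatten_pendant L :
  perm_eq (flatten (map pendant_path L))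
          (map inr (pmap ohead L) ++ map inl (flatten L)).
Proof.
elim: L => [|[|a p] L IH] //=.
rewrite perm_cons map_cat -!cat_cons perm_sym perm_catCA perm_sym perm_cat2l.
exact: IH.
Qed.

Lemma uniq_flatten_pendant L :
  uniq (flatten (map pendant_path L)) = uniq (flatten L).
Proof.
rewrite (perm_uniq (perm_flatten_pendant L)) cat_uniq.
rewrite (map_inj_uniq (@inr_inj V V)) (map_inj_uniq (@inl_inj V V)).
have -> : has (mem (map inr (pmap ohead L))) (map inl (flatten L)) = false.
  by apply/negbTE/hasPn => _ /mapP[a _ ->]; apply/mapP => -[].
case uniqL: (uniq (flatten L)); rewrite ?andbF //=.
by rewrite (subseq_uniq (heads_subseq L) uniqL).
Qed.

Section Linkings.
Variables (n : nat) (emb : 'I_n -> V) (I : {set 'I_n}) (S : {set V}).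

Local Notation pendant_emb := (fun i => inr (emb i) : V + V).

Lemma linking_pendant L :
  is_linking (pendant_rel E) pendant_emb I (inl @: S) (map pendant_path L) <->
  is_linking E emb I S L.
Proof.
rewrite /is_linking all_map (eq_all dpath_pendant) uniq_flatten_pendant.
rewrite dstarts_pendant dends_pendant.
have -> : [set pendant_emb i | i in I] = inr @: (emb @: I).
  by rewrite -imset_comp.
have inr_set_inj := imset_inj (@inr_inj V V).
have inl_set_inj := imset_inj (@inl_inj V V).
split=> -[dpathL uniqL startsL endsL]; split=> //.
- exact: inr_set_inj.
- exact: inl_set_inj.
- by rewrite startsL.
- by rewrite endsL.
Qed.

Lemma linking_pendantE (M : seq (seq (V + V))) :
  is_linking (pendant_rel E) pendant_emb I (inl @: S) M ->
  M = map pendant_path (map unpendant_path M).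
Proof.
move=> [dpathM _ startsM endsM]; rewrite -map_comp.
apply/esym/map_id_in => -[|v r] // inM.
have /andP[pathr _] := allP dpathM _ inM.
have : v \in dstarts M by rewrite inE; apply/hasP; exists (v :: r).
rewrite startsM => /imsetP[i _ vE]; subst v.
have r_nil : r != [::].
  apply: contraTneq isT => r0.
  have : inr (emb i) \in dends M.
    by rewrite inE; apply/hasP; exists [:: inr (emb i)]; rewrite // -r0.
  by rewrite endsM => /imsetP[].
exact/esym/(path_pendant_inr pathr r_nil).
Qed.

End Linkings.

Section Weights.
Variables (R : realType) (w : V -> V -> R) (f : V -> R).

Definition pendant_weight (u v : V + V) : R :=
  match u, v with
  | inl a, inl b => w a b
  | inr a, _ => f a
  | _, _ => 0
  end.

Lemma pweight_cons2 (T : finType) (c : T -> T -> R) (u v : T) (s : seq T) :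
  pweight c [:: u, v & s] = c u v + pweight c (v :: s).
Proof. by rewrite /pweight big_cons. Qed.

Lemma pweight_map_inl p : pweight pendant_weight (map inl p) = pweight w p.
Proof.
elim: p => [|a [|b p] IH] //; first by rewrite /pweight !big_nil.
by rewrite [map _ _]/= pweight_cons2 pweight_cons2 -IH.
Qed.

Lemma pweight_pendant a p :
  pweight pendant_weight (pendant_path (a :: p)) = f a + pweight w (a :: p).
Proof.
rewrite /pendant_path (pweight_cons2 _ (inr a) (inl a)) -map_cons.
by rewrite pweight_map_inl.
Qed.

Lemma lweight_pendant L :
  lweight pendant_weight (map pendant_path L) =
  lweight w L + \sum_(a <- pmap ohead L) f a.
Proof.
rewrite /lweight big_map.
elim: L => [|[|a p] L IH]; first by rewrite !big_nil addr0.
  by rewrite !big_cons IH /pweight !big_nil !add0r.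
rewrite !big_cons IH pweight_pendant [f a + _]addrC -!addrA.
by congr (_ + _); apply: addrCA.
Qed.

(* A cycle through a pendant vertex would have to re-enter it, but pendant
   vertices have no in-edges. *)
Lemma no_neg_cycle_pendant :
  no_neg_cycle E w -> no_neg_cycle (pendant_rel E) pendant_weight.
Proof.
move=> noneg [a|a] r uniqr /= cycler.
- have /path_pendant_inl rE : path (pendant_rel E) (inl a) r.
    by move: cycler; rewrite rcons_path => /andP[].
  move: uniqr cycler; rewrite rE -map_rcons -!map_cons pweight_map_inl.
  rewrite (map_inj_uniq (@inl_inj V V)) path_pendant_map_inl.
  exact: noneg.
- case: r {uniqr} cycler => [|[b|b] r] //= /andP[_ /path_pendant_inl rE].
  have : inr a \in rcons r (inr a) by rewrite mem_rcons mem_head.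
  by rewrite rE => /mapP[].
Qed.

End Weights.
End PendantNetwork.

Arguments pendant_path {V}.

Section Translation.
Variables (R : realType) (V : finType) (n : nat).
Variables (E : rel V) (w : V -> V -> R) (emb : 'I_n -> V) (x : 'I_n -> R).
Hypothesis emb_inj : injective emb.

Definition source_weight (a : V) : R :=
  if [pick i | emb i == a] is Some i then x i else 0.

Lemma source_weight_emb i : source_weight (emb i) = x i.
Proof.
by rewrite /source_weight; case: pickP => [j /eqP /emb_inj -> | /(_ i)/eqP].
Qed.

Local Notation translated_weight := (pendant_weight w source_weight).

Lemma lweight_pendant_linking I S L :
  is_linking E emb I S L ->
  lweight translated_weight (map pendant_path L) =
  lweight w L + \sum_(i in I) x i.
Proof.
move=> linkL; rewrite lweight_pendant (sum_heads_linking _ emb_inj linkL).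
by congr (_ + _); apply: eq_bigr => i _; apply: source_weight_emb.
Qed.

Lemma min_linking_weight_pendant I S m :
  min_linking_weight E w emb I S m ->
  min_linking_weight (pendant_rel E) translated_weight (fun i => inr (emb i))
    I (inl @: S) (m + (\sum_(i in I) x i)%:E)%E.
Proof.
case=> [[no_linking ->] | [L [linkL -> minL]]]; [left | right].
  split=> // M /[dup] /linking_pendantE -> /linking_pendant.
  exact: no_linking.
exists (map pendant_path L); split.
- exact/linking_pendant.
- by rewrite (lweight_pendant_linking linkL).
- move=> M /[dup] /linking_pendantE -> /linking_pendant linkM.
  rewrite (lweight_pendant_linking linkM) -EFinD lee_fin lerD2r -lee_fin.
  exact: minL.
Qed.

End Translation.

Theorem proposition7p3 (R : realType) (n s : nat) (d : 'I_s -> nat)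
    (mu : 'I_s -> {set 'I_n} -> \bar R) (x : 'I_n -> R) :
  valuated_flag_gammoid d mu ->
  valuated_flag_gammoid d (translate_flag mu x).
Proof.
move=> [V [E [w [emb [S [[emb_inj noneg] S_proper S_card S_linked S_min]]]]]].
exists (V + V)%type, (pendant_rel E), (pendant_weight w (source_weight emb x)),
  (fun i => inr (emb i)), (fun j => inl @: S j).
split.
- by split=> [i j [/emb_inj] | ]; [| exact: no_neg_cycle_pendant].
- move=> j k ltjk; rewrite imset_proper //; last exact: S_proper.
  by move=> ? ? _ _; apply: inl_inj.
- by move=> j; rewrite card_imset //; apply: inl_inj.
- move=> j; have [I [L /linking_pendant linkL]] := S_linked j.
  by exists I, (map pendant_path L).
- by move=> j I cardI; apply: min_linking_weight_pendant (S_min j I cardI).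
Qed.
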